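(* Let $S^{(i)}_{n,k}$ be as defined (weights $a_j=1$, $n\ge2$, $1\le i\le n$). Convergence is in distribution. (1) For fixed $n\ge2$ and $k\to\infty$: $S^{(i)}_{n,k}/k\to\mathrm{Beta}(1,n-1)$. (2) For $n,k\to\infty$ with $k/n\to\infty$: $\frac nk S^{(i)}_{n,k}\to\mathrm{Exp}(1)$. (3) For $n,k\to\infty$ with $k/n\to c>0$: $S^{(i)}_{n,k}\to G$, where $\mathbb P\{G=0\}=\frac1{1+c}+\frac{c}{(1+c)^2}$ and $\mathbb P\{G=j\}=\frac{c^{j+1}}{(1+c)^{j+2}}$ for $j\ge1$. (4) For $n\to\infty$ with $k/n\to0$: $S^{(i)}_{n,k}\to0$.
   Context: For $\vec\ell=(\ell_1,\dots,\ell_k)$ with $n\ge\ell_1\ge\cdots\ge\ell_k\ge1$ and $1\le i\le n$ let $\sigma^{(i)}(\vec\ell)=|\{1\le j\le k-1:\ell_j=\ell_{j+1}=i\}|$. $S^{(i)}_{n,k}=\sigma^{(i)}(\vec\ell)$ for $\vec\ell$ uniformly random among the $\binom{n+k-1}{k}$ such sequences. $\mathrm{Beta}(1,n-1)$ has density $(n-1)(1-x)^{n-2}$ on $[0,1]$; $\mathrm{Exp}(1)$ has density $e^{-x}$ on $[0,\infty)$. *)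

From Stdlib Require Import Reals Lra Lia ZArith Arith List Bool.
Import ListNotations.
Open Scope R_scope.

Fixpoint all_lists (n k : nat) : list (list nat) :=
  match k with
  | O => [ [] ]
  | S k' => flat_map (fun a => map (cons a) (all_lists n k')) (seq 1 n)
  end.

Fixpoint nonincb (l : list nat) : bool :=
  match l with
  | a :: ((b :: _) as t) => andb (Nat.leb b a) (nonincb t)
  | _ => true
  end.

(* The sample space: sequences n >= l_1 >= ... >= l_k >= 1. *)
Definition adm (n k : nat) : list (list nat) := filter nonincb (all_lists n k).

Fixpoint sigma (i : nat) (l : list nat) : nat :=
  match l with
  | a :: ((b :: _) as t) =>
      ((if andb (Nat.eqb a i) (Nat.eqb b i) then 1 else 0) + sigma i t)%nat
  | _ => O
  end.

(* P{ g(S^{(i)}_{n,k}) <= x } for l uniform on adm n k. *)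
Definition cdfS (n k i : nat) (g : nat -> R) (x : R) : R :=
  INR (length (filter (fun l => if Rle_dec (g (sigma i l)) x then true else false)
                      (adm n k)))
  / INR (length (adm n k)).

(* CDF of Beta(1, n-1) (density (n-1)(1-x)^(n-2) on [0,1]). *)
Definition beta1_cdf (n : nat) (x : R) : R :=
  if Rlt_dec x 0 then 0
  else if Rle_dec x 1 then 1 - (1 - x) ^ (n - 1) else 1.

Definition exp1_cdf (x : R) : R :=
  if Rlt_dec x 0 then 0 else 1 - exp (- x).

Definition G_pmf (c : R) (j : nat) : R :=
  match j with
  | O => 1 / (1 + c) + c / (1 + c) ^ 2
  | S _ => c ^ (j + 1) / (1 + c) ^ (j + 2)
  end.

Definition G_cdf (c x : R) : R :=
  if Rlt_dec x 0 then 0 else sum_f_R0 (G_pmf c) (Z.to_nat (Int_part x)).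

Definition delta0_cdf (x : R) : R := if Rlt_dec x 0 then 0 else 1.

(* For l uniform among the nonincreasing sequences n >= l_1 >= ... >= l_k >= 1
   (k-multisets of {1..n}, counted by binom(n+k-1, k)), the copies of a value i are
   consecutive, so sigma^(i)(l) = occ_i(l) - 1 where occ_i counts the occurrences of i.
   Deleting j copies of i is a bijection onto the sequences of length k - j, hence
     P{occ_i >= j} = binom(n+k-j-1, k-j) / binom(n+k-1, k)
                   = prod_{r<j} (k-r)/(n+k-r-1)
   independently of i, and every distribution function in the statement is
   1 - P{occ_i >= t + 2} at an explicit integer level t.  Bounding each factor of the
   product between its first and its j-th value gives
     ((k-j+1)/(n+k-j))^j <= P{occ_i >= j} <= (k/(n+k-1))^j,
   which yields the exponential limit (k/n -> oo), the geometric limit (k/n -> c) and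
   the degenerate limit (k/n -> 0); for fixed n the binomial ratio itself converges to
   (1-x)^(n-1), the Beta(1, n-1) tail. *)

From Pilot Require Import Defs.
From Stdlib Require Import Reals Lra Lia ZArith List Bool.
From Coquelicot Require Import Coquelicot.
Import ListNotations.
Open Scope R_scope.

Fixpoint noninc_lists (n k : nat) : list (list nat) :=
  match k with
  | O => [ [] ]
  | S k' => flat_map (fun a => map (cons a) (noninc_lists a k')) (seq 1 n)
  end.

Definition head_le (a : nat) (t : list nat) : bool :=
  match t with [] => true | b :: _ => Nat.leb b a end.

Lemma filter_flat_map {A B} (p : B -> bool) (f : A -> list B) (l : list A) :
  filter p (flat_map f l) = flat_map (fun x => filter p (f x)) l.
Proof. induction l as [|a l IH]; simpl; [reflexivity|]. now rewrite filter_app, IH. Qed.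

Lemma filter_map_cons (p : list nat -> bool) (a : nat) (l : list (list nat)) :
  filter p (map (cons a) l) = map (cons a) (filter (fun t => p (a :: t)) l).
Proof.
  induction l as [|t l IH]; simpl; [reflexivity|].
  destruct (p (a :: t)); simpl; now rewrite IH.
Qed.

Lemma flat_map_ext_in {A B} (f g : A -> list B) (l : list A) :
  (forall x, In x l -> f x = g x) -> flat_map f l = flat_map g l.
Proof. induction l as [|a l IH]; simpl; intros H; [reflexivity|]. rewrite H, IH; auto. Qed.

Lemma filter_head_le (k a n : nat) : (a <= n)%nat ->
  filter (head_le a) (noninc_lists n k) = noninc_lists a k.
Proof.
  intros Han. destruct k as [|k]; [reflexivity|]. simpl. rewrite filter_flat_map.
  replace n with (a + (n - a))%nat by lia. rewrite seq_app, flat_map_app.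
  rewrite (flat_map_ext_in _ (fun _ => []) (seq (1 + a) _)).
  2:{ intros x Hx. apply in_seq in Hx. rewrite filter_map_cons.
      rewrite (List.filter_ext _ (fun _ => false)); [now rewrite List.filter_false|].
      intros t. simpl. apply Nat.leb_gt. lia. }
  rewrite (flat_map_ext_in _ (fun x => map (cons x) (noninc_lists x k)) (seq 1 a)).
  2:{ intros x Hx. apply in_seq in Hx. rewrite filter_map_cons.
      rewrite (List.filter_ext _ (fun _ => true)); [now rewrite List.filter_true|].
      intros t. simpl. apply Nat.leb_le. lia. }
  induction (seq (1 + a) (n - a)); simpl; [apply app_nil_r|assumption].
Qed.

Lemma nonincb_cons (a : nat) (t : list nat) : nonincb (a :: t) = head_le a t && nonincb t.
Proof. destruct t; reflexivity. Qed.

Lemma filter_andb {A} (p q : A -> bool) (l : list A) :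
  filter (fun t => p t && q t) l = filter p (filter q l).
Proof.
  induction l as [|a l IH]; simpl; [reflexivity|].
  destruct (q a) eqn:Eq, (p a) eqn:Ep; simpl; rewrite ?Ep, IH; reflexivity.
Qed.

Lemma adm_noninc_lists (n k : nat) : adm n k = noninc_lists n k.
Proof.
  unfold adm. revert n. induction k as [|k IH]; intros n; [reflexivity|].
  simpl. rewrite filter_flat_map. apply flat_map_ext_in. intros a Ha. apply in_seq in Ha.
  rewrite filter_map_cons, (List.filter_ext _ _ (nonincb_cons a)), filter_andb, IH.
  rewrite filter_head_le; [reflexivity|lia].
Qed.

Lemma noninc_lists_split (n k : nat) :
  noninc_lists (S n) (S k) = noninc_lists n (S k) ++ map (cons (S n)) (noninc_lists (S n) k).
Proof.
  change (noninc_lists (S n) (S k))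
    with (flat_map (fun a => map (cons a) (noninc_lists a k)) (seq 1 (S n))).
  rewrite seq_S, flat_map_app. simpl. now rewrite app_nil_r.
Qed.

Lemma noninc_lists_length (n k : nat) (l : list nat) :
  In l (noninc_lists n k) -> length l = k.
Proof.
  revert n l. induction k as [|k IH]; simpl; intros n l Hl.
  - destruct Hl as [<-|[]]. reflexivity.
  - apply in_flat_map in Hl as [a [_ Hl]]. apply in_map_iff in Hl as [t [<- Ht]].
    simpl. now rewrite (IH a t Ht).
Qed.

Lemma noninc_lists_bound (n k : nat) (l : list nat) (a : nat) :
  In l (noninc_lists n k) -> In a l -> (a <= n)%nat.
Proof.
  revert n l. induction k as [|k IH]; simpl; intros n l Hl Ha.
  - destruct Hl as [<-|[]]. destruct Ha.
  - apply in_flat_map in Hl as [b [Hb Hl]]. apply in_map_iff in Hl as [t [<- Ht]].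
    apply in_seq in Hb. destruct Ha as [<-|Ha]; [lia|].
    specialize (IH b t Ht Ha). lia.
Qed.

(* [multichoose n k] = |adm n k| = binom(n+k-1, k), the number of k-multisets of {1..n}. *)
Definition multichoose (n k : nat) : nat := length (noninc_lists n k).

Lemma multichoose_S (n k : nat) :
  multichoose (S n) (S k) = (multichoose n (S k) + multichoose (S n) k)%nat.
Proof. unfold multichoose. now rewrite noninc_lists_split, length_app, length_map. Qed.

Lemma multichoose_pos (n k : nat) : (1 <= n)%nat -> (1 <= multichoose n k)%nat.
Proof.
  intros Hn. destruct n as [|n]; [lia|].
  induction k as [|k IH]; [reflexivity|]. rewrite multichoose_S. lia.
Qed.

Lemma multichoose_1 (k : nat) : multichoose 1 k = 1%nat.
Proof. induction k as [|k IH]; [reflexivity|]. now rewrite multichoose_S, IH. Qed.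

Lemma multichoose_n_1 (n : nat) : multichoose n 1 = n.
Proof.
  induction n as [|n IH]; [reflexivity|].
  rewrite multichoose_S, IH. unfold multichoose; simpl; lia.
Qed.

Lemma multichoose_succ_k (n k : nat) : (1 <= n)%nat ->
  (S k * multichoose n (S k) = (n + k) * multichoose n k)%nat.
Proof.
  intros Hn. destruct n as [|n]; [lia|]. clear Hn. revert k.
  induction n as [|n IHn]; intros k.
  - rewrite !multichoose_1. lia.
  - induction k as [|k IHk].
    + rewrite multichoose_n_1. unfold multichoose; simpl; lia.
    + pose proof (multichoose_S (S n) (S k)). pose proof (IHn (S k)).
      pose proof (multichoose_S (S n) k). rewrite multichoose_S. nia.
Qed.

Lemma multichoose_succ_n (n k : nat) : (1 <= n)%nat ->
  (n * multichoose (S n) k = (n + k) * multichoose n k)%nat.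
Proof.
  intros Hn. induction k as [|k IHk]; [unfold multichoose; simpl; lia|].
  rewrite multichoose_S. pose proof (multichoose_succ_k n k Hn). nia.
Qed.

Fixpoint occ (i : nat) (l : list nat) : nat :=
  match l with [] => O | a :: t => ((if Nat.eqb a i then 1 else 0) + occ i t)%nat end.

Definition count_occ_ge (i j n k : nat) : nat :=
  length (filter (fun l => Nat.leb j (occ i l)) (noninc_lists n k)).

Lemma count_occ_ge_split (i j n k : nat) :
  count_occ_ge i j (S n) (S k) =
  (count_occ_ge i j n (S k) +
   if Nat.eqb (S n) i then count_occ_ge i (j - 1) (S n) k else count_occ_ge i j (S n) k)%nat.
Proof.
  unfold count_occ_ge.
  rewrite noninc_lists_split, filter_app, length_app, filter_map_cons, length_map.
  f_equal. destruct (Nat.eqb (S n) i) eqn:E; f_equal; apply List.filter_ext; intros t;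
    cbn [occ]; rewrite E; [|reflexivity].
  destruct j; simpl; [reflexivity|]. now rewrite Nat.sub_0_r.
Qed.

Lemma count_occ_ge_0 (i n k : nat) : count_occ_ge i 0 n k = multichoose n k.
Proof. unfold count_occ_ge. now rewrite List.filter_true. Qed.

Lemma count_occ_ge_long (i j n k : nat) : (k < j)%nat -> count_occ_ge i j n k = 0%nat.
Proof.
  intros Hkj. unfold count_occ_ge.
  rewrite (filter_ext_in _ (fun _ => false)); [now rewrite List.filter_false|].
  intros l Hl. apply Nat.leb_gt. rewrite <- (noninc_lists_length n k l Hl) in Hkj.
  enough (occ i l <= length l)%nat by lia.
  clear. induction l as [|a l IH]; simpl; [lia|]. destruct (Nat.eqb a i); lia.
Qed.

Lemma count_occ_ge_absent (i j n k : nat) : (n < i)%nat -> count_occ_ge i (S j) n k = 0%nat.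
Proof.
  intros Hni. unfold count_occ_ge.
  rewrite (filter_ext_in _ (fun _ => false)); [now rewrite List.filter_false|].
  intros l Hl. apply Nat.leb_gt.
  enough (occ i l = 0)%nat by lia.
  assert (Hbound : forall a, In a l -> (a <= n)%nat)
    by (intros a; now apply noninc_lists_bound with k). clear Hl.
  induction l as [|a l IH]; simpl; [reflexivity|].
  destruct (Nat.eqb_spec a i) as [->|_].
  - specialize (Hbound i (or_introl eq_refl)). lia.
  - apply IH. intros b Hb. apply Hbound. now right.
Qed.

(* Removing [j] copies of [i] is a bijection onto the sequences of length [k - j]:
   exactly binom(n+k-j-1, k-j) sequences contain [i] at least [j] times. *)
Lemma count_occ_ge_formula (i j n k : nat) : (1 <= i <= n)%nat -> (j <= k)%nat ->
  count_occ_ge i j n k = multichoose n (k - j).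
Proof.
  intros Hi. revert j k. induction n as [|n IHn]; intros j k; [lia|].
  revert j. induction k as [|k IHk]; intros j Hjk.
  { replace j with 0%nat by lia. apply count_occ_ge_0. }
  destruct j as [|j]; [apply count_occ_ge_0|].
  rewrite count_occ_ge_split. simpl (S j - 1)%nat. rewrite Nat.sub_0_r.
  destruct (Nat.eqb_spec (S n) i) as [Ei|Ei].
  - rewrite count_occ_ge_absent, IHk by lia. reflexivity.
  - rewrite IHn by lia.
    destruct (Nat.eq_dec j k) as [->|Hjk'].
    + rewrite count_occ_ge_long, Nat.sub_diag by lia. reflexivity.
    + rewrite IHk by lia. replace (S k - S j)%nat with (S (k - S j)) by lia.
      now rewrite multichoose_S.
Qed.

Lemma occ_below (i b : nat) (t : list nat) :
  nonincb (b :: t) = true -> (b < i)%nat -> occ i (b :: t) = 0%nat.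
Proof.
  revert b. induction t as [|c t IH]; intros b H Hb.
  - simpl. destruct (Nat.eqb_spec b i); [lia|reflexivity].
  - simpl in H. apply andb_prop in H as [H1 H2]. apply Nat.leb_le in H1.
    cbn [occ] in *. rewrite (IH c H2) by lia. destruct (Nat.eqb_spec b i); [lia|reflexivity].
Qed.

(* In a nonincreasing sequence the copies of [i] are consecutive, so the number of
   adjacent equal pairs (i, i) is one less than the number of occurrences. *)
Lemma sigma_occ (i : nat) (l : list nat) : nonincb l = true -> Defs.sigma i l = pred (occ i l).
Proof.
  induction l as [|a [|b t] IH]; intros H; [reflexivity|simpl; now destruct (Nat.eqb a i)|].
  rewrite nonincb_cons in H. apply andb_prop in H as [H1 H2]. simpl in H1. apply Nat.leb_le in H1.
  change (Defs.sigma i (a :: b :: t))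
    with (((if andb (Nat.eqb a i) (Nat.eqb b i) then 1 else 0) + Defs.sigma i (b :: t))%nat).
  change (occ i (a :: b :: t)) with (((if Nat.eqb a i then 1 else 0) + occ i (b :: t))%nat).
  rewrite IH by exact H2.
  assert (Hocc_b : occ i (b :: t) = ((if Nat.eqb b i then 1 else 0) + occ i t)%nat)
    by reflexivity.
  destruct (Nat.eqb_spec a i), (Nat.eqb_spec b i); cbn [andb]; try lia.
  rewrite (occ_below i b t H2) by lia. reflexivity.
Qed.

(* [occ_tail n k j] = P{ i occurs at least j times } for l uniform on [adm n k]
   (for any 1 <= i <= n) = binom(n+k-j-1, k-j) / binom(n+k-1, k). *)
Definition occ_tail (n k j : nat) : R :=
  if Nat.leb j k then INR (multichoose n (k - j)) / INR (multichoose n k) else 0.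

Lemma multichoose_INR_neq0 (n k : nat) : (1 <= n)%nat -> INR (multichoose n k) <> 0.
Proof. intros Hn. apply not_0_INR. pose proof (multichoose_pos n k Hn). lia. Qed.

(* Since sigma = occ - 1, the event { g(sigma) <= x } is { occ <= t + 1 } whenever
   { s | g s <= x } = {0, ..., t}; its probability is 1 - P{ occ >= t + 2 }. *)
Lemma cdf_occ_tail (n k i t : nat) (g : nat -> R) (x : R) : (1 <= i <= n)%nat ->
  (forall s, g s <= x <-> (s <= t)%nat) -> cdfS n k i g x = 1 - occ_tail n k (t + 2).
Proof.
  intros Hi Hg. unfold cdfS.
  rewrite (filter_ext_in _ (fun l => negb (Nat.leb (t + 2) (occ i l)))).
  2:{ intros l Hl. unfold adm in Hl. apply filter_In in Hl as [_ Hl].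
      rewrite (sigma_occ i l Hl).
      destruct (Rle_dec _ _) as [H|H]; symmetry.
      - apply Hg in H. apply negb_true_iff, Nat.leb_gt. lia.
      - apply negb_false_iff, Nat.leb_le. rewrite Hg in H. lia. }
  pose proof (filter_length (fun l => Nat.leb (t + 2) (occ i l)) (adm n k)) as Hsplit.
  rewrite adm_noninc_lists in *. fold (count_occ_ge i (t + 2) n k) in Hsplit.
  fold (multichoose n k) in Hsplit |- *.
  assert (HN := multichoose_INR_neq0 n k ltac:(lia)).
  unfold occ_tail. destruct (Nat.leb_spec (t + 2) k) as [Hle|Hgt].
  - rewrite count_occ_ge_formula in Hsplit by lia.
    pose proof (multichoose_pos n k ltac:(lia)).
    replace (length _) with (multichoose n k - multichoose n (k - (t + 2)))%nat by lia.
    rewrite minus_INR by lia. field. exact HN.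
  - rewrite count_occ_ge_long in Hsplit by lia.
    replace (length _) with (multichoose n k) by lia. field. exact HN.
Qed.

Lemma cdf_empty (n k i : nat) (g : nat -> R) (x : R) : (forall s, x < g s) -> cdfS n k i g x = 0.
Proof.
  intros H. unfold cdfS. rewrite (List.filter_ext _ (fun _ => false)).
  - rewrite List.filter_false. simpl. unfold Rdiv. ring.
  - intros l. destruct (Rle_dec _ _) as [Hle|]; [|reflexivity].
    specialize (H (Defs.sigma i l)). lra.
Qed.

(* [rate n k s] = (n-1)/(n+k-s); the j-th factor of the product formula for
   [occ_tail] is [1 - rate n k j]. *)
Definition rate (n k : nat) (s : R) : R := (INR n - 1) / (INR n + INR k - s).

Lemma rate_bounds (n k : nat) (s1 s2 : R) : (2 <= n)%nat -> s1 <= s2 <= INR k + 1 ->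
  0 <= rate n k s1 <= rate n k s2 /\ rate n k s2 <= 1.
Proof.
  intros Hn Hs. apply (le_INR 2) in Hn. simpl in Hn. unfold rate.
  assert (Hd1 : 0 < INR n + INR k - s2) by lra.
  repeat split.
  - apply Rmult_le_pos; [lra|]. apply Rlt_le, Rinv_0_lt_compat. lra.
  - apply Rmult_le_compat_l; [lra|]. apply Rinv_le_contravar; lra.
  - apply Rmult_le_reg_r with (INR n + INR k - s2); [exact Hd1|].
    unfold Rdiv. rewrite Rmult_assoc, Rinv_l by lra. lra.
Qed.

Lemma occ_tail_0 (n k : nat) : (1 <= n)%nat -> occ_tail n k 0 = 1.
Proof.
  intros Hn. unfold occ_tail. simpl. rewrite Nat.sub_0_r. field.
  now apply multichoose_INR_neq0.
Qed.

Lemma occ_tail_nonneg (n k j : nat) : (1 <= n)%nat -> 0 <= occ_tail n k j.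
Proof.
  intros Hn. unfold occ_tail. destruct (Nat.leb j k); [|lra].
  apply Rlt_le, Rdiv_lt_0_compat; apply lt_0_INR, multichoose_pos, Hn.
Qed.

Lemma occ_tail_step (n k j : nat) : (2 <= n)%nat -> (j < k)%nat ->
  occ_tail n k (S j) = occ_tail n k j * (1 - rate n k (INR j + 1)).
Proof.
  intros Hn Hjk. unfold occ_tail, rate.
  rewrite (proj2 (Nat.leb_le (S j) k)), (proj2 (Nat.leb_le j k)) by lia.
  pose proof (multichoose_succ_k n (k - S j) ltac:(lia)) as Habs.
  replace (S (k - S j)) with (k - j)%nat in Habs by lia.
  apply (f_equal INR) in Habs. rewrite !mult_INR, !plus_INR, !minus_INR in Habs by lia.
  rewrite S_INR in Habs.
  assert (HN := multichoose_INR_neq0 n k ltac:(lia)).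
  apply lt_INR in Hjk. apply (le_INR 2) in Hn. simpl in Hn.
  assert (Hd : INR n + INR k - (INR j + 1) <> 0) by lra.
  assert (Hprev : INR (multichoose n (k - S j)) =
    (INR k - INR j) * INR (multichoose n (k - j)) / (INR n + INR k - (INR j + 1))).
  { rewrite Habs. field. lra. }
  rewrite Hprev. field. auto.
Qed.

(* Each factor is at most the first one: P{occ >= j} <= (1 - rate 1)^j = (k/(n+k-1))^j. *)
Lemma occ_tail_upper (n k j : nat) : (2 <= n)%nat -> occ_tail n k j <= (1 - rate n k 1) ^ j.
Proof.
  intros Hn. pose proof (pos_INR k).
  assert (Hfirst : 0 <= 1 - rate n k 1)
    by (pose proof (rate_bounds n k 1 1 Hn ltac:(lra)); lra).
  induction j as [|j IH].
  - rewrite occ_tail_0 by lia. simpl. lra.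
  - destruct (Nat.lt_ge_cases j k) as [Hjk|Hjk].
    + rewrite occ_tail_step by assumption. simpl. rewrite Rmult_comm.
      pose proof (le_INR (S j) k Hjk) as Hj. rewrite S_INR in Hj. pose proof (pos_INR j).
      pose proof (rate_bounds n k 1 (INR j + 1) Hn ltac:(lra)).
      apply Rmult_le_compat; [lra|apply occ_tail_nonneg; lia|lra|exact IH].
    + unfold occ_tail. rewrite (proj2 (Nat.leb_gt (S j) k)) by lia.
      apply pow_le, Hfirst.
Qed.

(* Each of the first j factors is at least the j-th one:
   P{occ >= j} >= (1 - rate j)^j = ((k-j+1)/(n+k-j))^j. *)
Lemma occ_tail_lower (n k j : nat) : (2 <= n)%nat -> (j <= k)%nat ->
  (1 - rate n k (INR j)) ^ j <= occ_tail n k j.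
Proof.
  intros Hn. induction j as [|j IH]; intros Hjk.
  - rewrite occ_tail_0 by lia. simpl. lra.
  - rewrite occ_tail_step by lia. apply le_INR in Hjk. rewrite S_INR in *.
    pose proof (pos_INR j).
    pose proof (rate_bounds n k (INR j) (INR j + 1) Hn ltac:(lra)).
    simpl. rewrite Rmult_comm. apply Rmult_le_compat_r; [lra|].
    apply Rle_trans with ((1 - rate n k (INR j)) ^ j).
    + apply pow_incr. lra.
    + apply IH. apply INR_le. lra.
Qed.

Lemma eventually_lt_lim (u : nat -> R) (l b : R) :
  is_lim_seq u l -> l < b -> eventually (fun m => u m < b).
Proof.
  intros Hu Hb. apply is_lim_seq_spec in Hu.
  destruct (Hu (mkposreal (b - l) ltac:(lra))) as [N HN].
  exists N. intros m Hm. specialize (HN m Hm). simpl in HN. apply Rabs_def2 in HN. lra.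
Qed.

Lemma eventually_gt_infty (u : nat -> R) (b : R) :
  is_lim_seq u p_infty -> eventually (fun m => b < u m).
Proof. intros Hu. apply is_lim_seq_spec in Hu. apply Hu. Qed.

Lemma lim_inv_infty (u : nat -> R) : is_lim_seq u p_infty -> is_lim_seq (fun m => / u m) 0.
Proof. intros Hu. apply (is_lim_seq_inv _ _ Hu). discriminate. Qed.

Lemma lim_pow (u : nat -> R) (l : R) (j : nat) :
  is_lim_seq u l -> is_lim_seq (fun m => u m ^ j) (l ^ j).
Proof.
  intros Hu. induction j as [|j IH]; [apply is_lim_seq_const|].
  apply (is_lim_seq_mult' u (fun m => u m ^ j)); assumption.
Qed.

Lemma lim_opp (u : nat -> R) (l : R) : is_lim_seq u l -> is_lim_seq (fun m => - u m) (- l).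
Proof. intros Hu. now apply is_lim_seq_opp in Hu. Qed.

Lemma lim_replace (u : nat -> R) (l1 l2 : R) : is_lim_seq u l1 -> l1 = l2 -> is_lim_seq u l2.
Proof. now intros H <-. Qed.

(* Elementary bounds from 1 + y <= exp y:  exp(-a/(1-a)) <= 1 - a <= exp(-a) for a < 1. *)
Lemma one_minus_exp_bounds (a : R) : a < 1 -> exp (- (a / (1 - a))) <= 1 - a <= exp (- a).
Proof.
  intros Ha. split.
  - set (y := a / (1 - a)). pose proof (exp_ineq1_le y) as Hexp. rewrite exp_Ropp.
    replace (1 - a) with (/ (1 + y)) by (unfold y; field; lra).
    apply Rinv_le_contravar; [|exact Hexp].
    replace (1 + y) with (/ (1 - a)) by (unfold y; field; lra).
    apply Rinv_0_lt_compat. lra.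
  - pose proof (exp_ineq1_le (- a)). lra.
Qed.

Lemma exp_pow (y : R) (j : nat) : exp y ^ j = exp (INR j * y).
Proof.
  induction j as [|j IH]; simpl pow; [now rewrite Rmult_0_l, exp_0|].
  rewrite IH, S_INR, <- exp_plus. f_equal. ring.
Qed.

Lemma lim_one_minus_pow (a : nat -> R) (j : nat -> nat) (x : R) :
  is_lim_seq a 0 -> is_lim_seq (fun m => INR (j m) * a m) x ->
  is_lim_seq (fun m => (1 - a m) ^ (j m)) (exp (- x)).
Proof.
  intros Ha Hja.
  assert (Hcont : forall y, continuity_pt exp y)
    by (intros y; apply derivable_continuous_pt, derivable_pt_exp).
  apply is_lim_seq_le_le_loc with
    (u := fun m => exp (- (INR (j m) * a m) / (1 - a m)))
    (w := fun m => exp (- (INR (j m) * a m))).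
  - apply (filter_imp (fun m => a m < 1)); [|apply (eventually_lt_lim _ 0); [assumption|lra]].
    intros m Hm. destruct (one_minus_exp_bounds (a m) Hm) as [Hlo Hhi].
    replace (- (INR (j m) * a m) / (1 - a m)) with (INR (j m) * - (a m / (1 - a m)))
      by (field; lra).
    replace (- (INR (j m) * a m)) with (INR (j m) * - a m) by ring.
    rewrite <- !exp_pow. split; apply pow_incr; split; try apply Rlt_le, exp_pos; lra.
  - apply is_lim_seq_continuous; [apply Hcont|].
    apply (lim_replace _ (- x / (1 - 0))); [|field].
    apply is_lim_seq_div'; [apply lim_opp|apply is_lim_seq_minus'|lra];
      auto using is_lim_seq_const.
  - apply is_lim_seq_continuous; [apply Hcont|]. now apply lim_opp.
Qed.

(* [flo y] = floor y for y >= 0, the integer part used by [G_cdf]. *)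
Definition flo (y : R) : nat := Z.to_nat (Int_part y).

Lemma flo_spec (y : R) : 0 <= y -> INR (flo y) <= y < INR (flo y) + 1.
Proof.
  intros Hy. destruct (base_Int_part y) as [H1 H2].
  assert (Hz : (0 <= Int_part y)%Z).
  { assert (Hlt : (-1 < Int_part y)%Z) by (apply lt_IZR; simpl; lra). lia. }
  unfold flo. rewrite INR_IZR_INZ, Z2Nat.id by exact Hz. lra.
Qed.

Lemma le_flo_iff (y : R) (s : nat) : 0 <= y -> INR s <= y <-> (s <= flo y)%nat.
Proof.
  intros Hy. pose proof (flo_spec y Hy) as [Hlo Hhi]. split; intros Hs.
  - assert (Hlt : INR s < INR (flo y + 1)) by (rewrite plus_INR; simpl; lra).
    apply INR_lt in Hlt. lia.
  - apply le_INR in Hs. lra.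
Qed.

Lemma cdf_scaled (n k i : nat) (g : nat -> R) (a x : R) : (1 <= i <= n)%nat ->
  0 < a -> 0 <= x -> (forall s, g s = a * INR s) ->
  cdfS n k i g x = 1 - occ_tail n k (flo (x / a) + 2).
Proof.
  intros Hi Ha Hx Hg. apply cdf_occ_tail; [exact Hi|]. intros s.
  rewrite Hg, <- le_flo_iff by (apply Rmult_le_pos; [lra|apply Rlt_le, Rinv_0_lt_compat, Ha]).
  assert (E : a * (x / a) = x) by (field; lra).
  split; intros H.
  - apply Rmult_le_reg_l with a; [exact Ha|]. now rewrite E.
  - rewrite <- E. apply Rmult_le_compat_l; lra.
Qed.

Lemma cdf_unscaled (n k i : nat) (x : R) : (1 <= i <= n)%nat -> 0 <= x ->
  cdfS n k i INR x = 1 - occ_tail n k (flo x + 2).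
Proof. intros Hi Hx. apply cdf_occ_tail; [exact Hi|]. intros s. now apply le_flo_iff. Qed.

Lemma cdf_negative (n k i : nat) (g : nat -> R) (x : R) :
  (forall s, 0 <= g s) -> x < 0 -> cdfS n k i g x = 0.
Proof. intros Hg Hx. apply cdf_empty. intros s. specialize (Hg s). lra. Qed.

Lemma lim_threshold (a : nat -> R) (x : R) : 0 <= x -> is_lim_seq a 0 ->
  eventually (fun m => 0 < a m) ->
  is_lim_seq (fun m => INR (flo (x / a m) + 2) * a m) x.
Proof.
  intros Hx Ha Hpos.
  apply is_lim_seq_le_le_loc with (u := fun m => x + a m) (w := fun m => x + 2 * a m).
  - revert Hpos. apply filter_imp. intros m Hm.
    assert (Hy : 0 <= x / a m) by (apply Rmult_le_pos; [lra|apply Rlt_le, Rinv_0_lt_compat, Hm]).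
    pose proof (flo_spec _ Hy) as [Hlo Hhi]. rewrite plus_INR. simpl (INR 2).
    assert (Hxy : x = x / a m * a m) by (field; lra).
    set (y := x / a m) in *. clearbody y. rewrite Hxy. split; nra.
  - apply (lim_replace _ (x + 0)); [|ring].
    apply is_lim_seq_plus'; [apply is_lim_seq_const|exact Ha].
  - apply (lim_replace _ (x + 2 * 0)); [|ring].
    apply is_lim_seq_plus'; [apply is_lim_seq_const|].
    apply is_lim_seq_mult'; [apply is_lim_seq_const|exact Ha].
Qed.

Lemma multichoose_ratio_succ (n k m : nat) : (1 <= n)%nat -> (1 <= k)%nat ->
  INR (multichoose (S n) m) / INR (multichoose (S n) k) =
  INR (multichoose n m) / INR (multichoose n k) *
  ((INR n / INR k + INR m / INR k) / (INR n / INR k + 1)).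
Proof.
  intros Hn Hk.
  assert (Habs : forall j,
    INR (multichoose (S n) j) = (INR n + INR j) / INR n * INR (multichoose n j)).
  { intros j. pose proof (multichoose_succ_n n j Hn) as E. apply (f_equal INR) in E.
    rewrite !mult_INR, plus_INR in E. apply (le_INR 1) in Hn. simpl in Hn.
    apply Rmult_eq_reg_l with (INR n); [rewrite E; field; lra|lra]. }
  rewrite !Habs. apply (le_INR 1) in Hn, Hk. simpl in Hn, Hk. pose proof (pos_INR m).
  assert (HN := multichoose_INR_neq0 n k ltac:(apply INR_le; simpl; lra)).
  field. repeat split; lra.
Qed.

Lemma multichoose_ratio_lim (n : nat) (mk : nat -> nat) (y : R) : (1 <= n)%nat ->
  is_lim_seq (fun k => INR (mk k) / INR k) y ->
  is_lim_seq (fun k => INR (multichoose n (mk k)) / INR (multichoose n k)) (y ^ (n - 1)).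
Proof.
  intros Hn Hy. induction n as [|n IH]; [lia|].
  destruct (Nat.eq_dec n 0) as [->|Hn0].
  - apply (is_lim_seq_ext (fun _ => 1)); [|apply is_lim_seq_const].
    intros k. rewrite !multichoose_1. simpl. field.
  - assert (Hinv : is_lim_seq (fun k => INR n / INR k) 0).
    { apply (lim_replace _ (INR n * 0)); [|ring].
      apply is_lim_seq_mult'; [apply is_lim_seq_const|apply lim_inv_infty, is_lim_seq_INR]. }
    apply (is_lim_seq_ext_loc (fun k => INR (multichoose n (mk k)) / INR (multichoose n k) *
        ((INR n / INR k + INR (mk k) / INR k) / (INR n / INR k + 1)))).
    + exists 1%nat. intros k Hk. symmetry. apply multichoose_ratio_succ; lia.
    + apply (lim_replace _ (y ^ (n - 1) * ((0 + y) / (0 + 1)))).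
      * apply is_lim_seq_mult'; [apply IH; lia|].
        apply is_lim_seq_div'; [apply is_lim_seq_plus'|apply is_lim_seq_plus'|lra];
          auto using is_lim_seq_const.
      * replace (S n - 1)%nat with (S (n - 1)) by lia. simpl. field.
Qed.

Lemma occ_tail_beyond (n k j : nat) : (k < j)%nat -> occ_tail n k j = 0.
Proof. intros Hkj. unfold occ_tail. now rewrite (proj2 (Nat.leb_gt j k)). Qed.

Lemma occ_tail_lim_beta (n : nat) (J : nat -> nat) (x : R) : (2 <= n)%nat -> x < 1 ->
  is_lim_seq (fun k => INR (J k) / INR k) x ->
  is_lim_seq (fun k => occ_tail n k (J k)) ((1 - x) ^ (n - 1)).
Proof.
  intros Hn Hx HJ.
  assert (Hev : eventually (fun k => (J k < k)%nat /\ (1 <= k)%nat)).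
  { apply (filter_imp (fun k => INR (J k) / INR k < 1 /\ (1 <= k)%nat)).
    - intros k [Hlt Hk]. split; [|exact Hk]. apply INR_lt.
      assert (0 < INR k) by (apply lt_0_INR; lia).
      apply Rmult_lt_reg_r with (/ INR k); [now apply Rinv_0_lt_compat|].
      rewrite Rinv_r by lra. exact Hlt.
    - apply filter_and; [apply (eventually_lt_lim _ x); assumption|now exists 1%nat]. }
  apply (is_lim_seq_ext_loc (fun k => INR (multichoose n (k - J k)) / INR (multichoose n k))).
  { revert Hev. apply filter_imp. intros k [Hlt _]. unfold occ_tail.
    now rewrite (proj2 (Nat.leb_le (J k) k)) by lia. }
  apply multichoose_ratio_lim; [lia|].
  apply (is_lim_seq_ext_loc (fun k => 1 - INR (J k) / INR k)).
  - revert Hev. apply filter_imp. intros k [Hlt Hk]. rewrite minus_INR by lia.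
    assert (0 < INR k) by (apply lt_0_INR; lia). field. lra.
  - apply is_lim_seq_minus'; [apply is_lim_seq_const|exact HJ].
Qed.

(* Part (1): for fixed n, S/k -> Beta(1, n-1).  The level is floor(x k) + 2; below x = 1
   [occ_tail_lim_beta] applies, and for x >= 1 the level exceeds k so the tail vanishes. *)
Theorem beta_limit (n i : nat) : (2 <= n)%nat -> (1 <= i <= n)%nat -> forall x : R,
  Un_cv (fun k => cdfS n k i (fun s => INR s / INR k) x) (beta1_cdf n x).
Proof.
  intros Hn Hi x. apply is_lim_seq_Reals. unfold beta1_cdf.
  assert (Hk : eventually (fun k => 0 < INR k)) by (exists 1%nat; intros k Hk; apply lt_0_INR; lia).
  destruct (Rlt_dec x 0) as [Hx|Hx].
  { apply (is_lim_seq_ext_loc (fun _ => 0)); [|apply is_lim_seq_const].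
    revert Hk. apply filter_imp. intros k Hk. symmetry. apply cdf_negative; [|exact Hx].
    intros s. apply Rmult_le_pos; [apply pos_INR|now apply Rlt_le, Rinv_0_lt_compat]. }
  apply Rnot_lt_le in Hx.
  set (J := fun k => (flo (x / / INR k) + 2)%nat).
  assert (Hcdf : eventually (fun k =>
    cdfS n k i (fun s => INR s / INR k) x = 1 - occ_tail n k (J k))).
  { revert Hk. apply filter_imp. intros k Hk.
    apply cdf_scaled; [exact Hi|now apply Rinv_0_lt_compat|exact Hx|].
    intros s. apply Rmult_comm. }
  assert (HJ : is_lim_seq (fun k => INR (J k) / INR k) x).
  { apply lim_threshold; [exact Hx|apply lim_inv_infty, is_lim_seq_INR|].
    revert Hk. apply filter_imp. intros k Hk. now apply Rinv_0_lt_compat. }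
  destruct (Rlt_dec x 1) as [Hx1|Hx1].
  - destruct (Rle_dec x 1) as [_|]; [|lra].
    apply (is_lim_seq_ext_loc (fun k => 1 - occ_tail n k (J k))).
    + revert Hcdf. apply filter_imp. intros k E. now rewrite E.
    + apply is_lim_seq_minus'; [apply is_lim_seq_const|now apply occ_tail_lim_beta].
  - assert (Hone : (if Rle_dec x 1 then 1 - (1 - x) ^ (n - 1) else 1) = 1).
    { destruct (Rle_dec x 1); [|reflexivity].
      replace x with 1 by lra. rewrite Rminus_diag, pow_i by lia. ring. }
    rewrite Hone. apply (is_lim_seq_ext_loc (fun _ => 1)); [|apply is_lim_seq_const].
    generalize (filter_and _ _ Hk Hcdf). apply filter_imp. intros k [Hkpos E].
    rewrite E, occ_tail_beyond; [ring|].
    assert (Ey : x / / INR k = x * INR k) by (field; lra).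
    assert (Hy : 0 <= x * INR k) by nra.
    pose proof (flo_spec _ Hy) as [_ Hhi]. apply INR_lt. unfold J. rewrite Ey, plus_INR.
    simpl (INR 2). nra.
Qed.

Section DiagonalRegimes.

Variables ns ks : nat -> nat.
Hypothesis ns_ge2 : forall m, (2 <= ns m)%nat.
Hypothesis ns_infty : is_lim_seq (fun m => INR (ns m)) p_infty.

Let N m := INR (ns m).
Let K m := INR (ks m).

Lemma N_ge2 (m : nat) : 2 <= N m.
Proof. apply (le_INR 2), ns_ge2. Qed.

Lemma K_nonneg (m : nat) : 0 <= K m.
Proof. apply pos_INR. Qed.

Lemma inv_N_lim : is_lim_seq (fun m => / N m) 0.
Proof. apply lim_inv_infty, ns_infty. Qed.

Lemma rate_lim_proportional (s l : R) : 0 <= l ->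
  is_lim_seq (fun m => K m / N m) l ->
  is_lim_seq (fun m => rate (ns m) (ks m) s) (1 / (1 + l)).
Proof.
  intros Hl Hr.
  apply (is_lim_seq_ext_loc (fun m => (1 - / N m) / (1 + K m / N m - s * / N m))).
  { apply (filter_imp (fun m => s < N m)); [|now apply eventually_gt_infty].
    intros m Hm. pose proof (N_ge2 m). pose proof (K_nonneg m).
    unfold rate. fold (N m) (K m). field. split; lra. }
  apply (lim_replace _ ((1 - 0) / (1 + l - s * 0))); [|field; lra].
  apply is_lim_seq_div'; [| |lra].
  - apply is_lim_seq_minus'; [apply is_lim_seq_const|exact inv_N_lim].
  - apply is_lim_seq_minus'; [apply is_lim_seq_plus'; [apply is_lim_seq_const|exact Hr]|].
    apply is_lim_seq_mult'; [apply is_lim_seq_const|exact inv_N_lim].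
Qed.

Lemma K_pos_sparse : is_lim_seq (fun m => K m / N m) p_infty -> eventually (fun m => 0 < K m).
Proof.
  intros Hr. apply (filter_imp (fun m => 0 < K m / N m)); [|now apply eventually_gt_infty].
  intros m Hm. pose proof (K_nonneg m).
  destruct (Rle_lt_or_eq_dec 0 (K m) ltac:(lra)) as [|E]; [assumption|].
  rewrite <- E in Hm. unfold Rdiv in Hm. lra.
Qed.

Lemma N_over_K_lim : is_lim_seq (fun m => K m / N m) p_infty -> is_lim_seq (fun m => N m / K m) 0.
Proof.
  intros Hr. apply (is_lim_seq_ext_loc (fun m => / (K m / N m))); [|now apply lim_inv_infty].
  generalize (K_pos_sparse Hr). apply filter_imp. intros m Hm. pose proof (N_ge2 m). field. lra.
Qed.

(* A level j ~ x k/n is negligible compared with k, since n -> oo. *)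
Lemma level_over_K_lim (J : nat -> nat) (x : R) :
  is_lim_seq (fun m => K m / N m) p_infty ->
  is_lim_seq (fun m => INR (J m) * (N m / K m)) x ->
  is_lim_seq (fun m => INR (J m) / K m) 0.
Proof.
  intros Hr HJ. apply (is_lim_seq_ext_loc (fun m => INR (J m) * (N m / K m) * / N m)).
  - generalize (K_pos_sparse Hr). apply filter_imp. intros m Hm. pose proof (N_ge2 m). field. lra.
  - apply (lim_replace _ (x * 0)); [|ring]. apply is_lim_seq_mult'; [exact HJ|exact inv_N_lim].
Qed.

Lemma rate_lim_sparse (J : nat -> nat) (s : nat -> R) (x : R) :
  is_lim_seq (fun m => K m / N m) p_infty ->
  is_lim_seq (fun m => INR (J m) * (N m / K m)) x ->
  (forall m, 0 <= s m <= INR (J m)) ->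
  is_lim_seq (fun m => rate (ns m) (ks m) (s m)) 0 /\
  is_lim_seq (fun m => INR (J m) * rate (ns m) (ks m) (s m)) x.
Proof.
  intros Hr HJ Hs.
  assert (HK := K_pos_sparse Hr).
  assert (HJk := level_over_K_lim J x Hr HJ).
  assert (Hv := N_over_K_lim Hr).
  assert (Hsk : is_lim_seq (fun m => s m / K m) 0).
  { apply is_lim_seq_le_le_loc with (u := fun _ => 0) (w := fun m => INR (J m) / K m);
      [|apply is_lim_seq_const|exact HJk].
    revert HK. apply filter_imp. intros m Hm. specialize (Hs m).
    split; unfold Rdiv; [apply Rmult_le_pos|apply Rmult_le_compat_r];
      try apply Rlt_le, Rinv_0_lt_compat; lra. }
  assert (Hev : eventually (fun m => 0 < K m /\ INR (J m) / K m < 1))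
    by (apply filter_and; [exact HK|apply (eventually_lt_lim _ 0); [exact HJk|lra]]).
  assert (Hform : eventually (fun m => rate (ns m) (ks m) (s m) =
    N m / K m * (1 - / N m) / (N m / K m + 1 - s m / K m))).
  { revert Hev. apply filter_imp. intros m [Hm HJm]. specialize (Hs m).
    pose proof (N_ge2 m). unfold rate. fold (N m) (K m).
    assert (INR (J m) < K m).
    { apply Rmult_lt_reg_r with (/ K m); [now apply Rinv_0_lt_compat|]. rewrite Rinv_r; lra. }
    field. repeat split; lra. }
  assert (Hden : is_lim_seq (fun m => N m / K m + 1 - s m / K m) (0 + 1 - 0)).
  { apply is_lim_seq_minus'; [|exact Hsk].
    apply is_lim_seq_plus'; [exact Hv|apply is_lim_seq_const]. }
  assert (Hnum : is_lim_seq (fun m => 1 - / N m) (1 - 0))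
    by (apply is_lim_seq_minus'; [apply is_lim_seq_const|exact inv_N_lim]).
  split.
  - apply (is_lim_seq_ext_loc (fun m => N m / K m * (1 - / N m) / (N m / K m + 1 - s m / K m))).
    + revert Hform. apply filter_imp. now intros m ->.
    + apply (lim_replace _ (0 * (1 - 0) / (0 + 1 - 0))); [|field].
      apply is_lim_seq_div'; [apply is_lim_seq_mult'|exact Hden|lra]; assumption.
  - apply (is_lim_seq_ext_loc (fun m => INR (J m) * (N m / K m) * (1 - / N m) /
      (N m / K m + 1 - s m / K m))).
    + revert Hform. apply filter_imp. intros m ->. unfold Rdiv. ring.
    + apply (lim_replace _ (x * (1 - 0) / (0 + 1 - 0))); [|field].
      apply is_lim_seq_div'; [apply is_lim_seq_mult'|exact Hden|lra]; assumption.
Qed.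

Lemma occ_tail_lim_exp (J : nat -> nat) (x : R) :
  is_lim_seq (fun m => K m / N m) p_infty ->
  is_lim_seq (fun m => INR (J m) * (N m / K m)) x ->
  (forall m, (1 <= J m)%nat) ->
  is_lim_seq (fun m => occ_tail (ns m) (ks m) (J m)) (exp (- x)).
Proof.
  intros Hr HJ HJ1.
  assert (Hsmall : eventually (fun m => (J m <= ks m)%nat)).
  { generalize (filter_and _ _ (K_pos_sparse Hr)
      (eventually_lt_lim _ 0 1 (level_over_K_lim J x Hr HJ) ltac:(lra))).
    apply filter_imp. intros m [Hm HJm]. apply INR_le.
    apply Rmult_le_reg_r with (/ K m); [now apply Rinv_0_lt_compat|]. fold (K m).
    rewrite Rinv_r; lra. }
  destruct (rate_lim_sparse J (fun m => INR (J m)) x Hr HJ) as [Hlo0 Hlo];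
    [intros m; split; [apply pos_INR|lra]|].
  destruct (rate_lim_sparse J (fun _ => 1) x Hr HJ) as [Hhi0 Hhi];
    [intros m; split; [lra|apply (le_INR 1), HJ1]|].
  apply is_lim_seq_le_le_loc with
    (u := fun m => (1 - rate (ns m) (ks m) (INR (J m))) ^ (J m))
    (w := fun m => (1 - rate (ns m) (ks m) 1) ^ (J m)).
  - revert Hsmall. apply filter_imp. intros m Hm.
    split; [apply occ_tail_lower|apply occ_tail_upper]; auto.
  - now apply lim_one_minus_pow.
  - now apply lim_one_minus_pow.
Qed.

Lemma occ_tail_lim_geom (c : R) (j : nat) : 0 < c ->
  is_lim_seq K p_infty -> is_lim_seq (fun m => K m / N m) c ->
  is_lim_seq (fun m => occ_tail (ns m) (ks m) j) ((c / (1 + c)) ^ j).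
Proof.
  intros Hc HK Hr.
  replace (c / (1 + c)) with (1 - 1 / (1 + c)) by (field; lra).
  apply is_lim_seq_le_le_loc with (u := fun m => (1 - rate (ns m) (ks m) (INR j)) ^ j)
    (w := fun m => (1 - rate (ns m) (ks m) 1) ^ j).
  - apply (filter_imp (fun m => INR j < K m)); [|now apply eventually_gt_infty].
    intros m Hm. apply INR_lt in Hm.
    split; [apply occ_tail_lower|apply occ_tail_upper]; auto; lia.
  - apply lim_pow, is_lim_seq_minus'; [apply is_lim_seq_const|].
    apply rate_lim_proportional; [lra|exact Hr].
  - apply lim_pow, is_lim_seq_minus'; [apply is_lim_seq_const|].
    apply rate_lim_proportional; [lra|exact Hr].
Qed.

Lemma occ_tail_lim_zero (j : nat) : (1 <= j)%nat ->
  is_lim_seq (fun m => K m / N m) 0 ->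
  is_lim_seq (fun m => occ_tail (ns m) (ks m) j) 0.
Proof.
  intros Hj Hr.
  apply is_lim_seq_le_le_loc with (u := fun _ => 0) (w := fun m => (1 - rate (ns m) (ks m) 1) ^ j).
  - apply filter_forall. intros m. split; [apply occ_tail_nonneg|apply occ_tail_upper]; auto.
    pose proof (ns_ge2 m). lia.
  - apply is_lim_seq_const.
  - apply (lim_replace _ ((1 - 1 / (1 + 0)) ^ j)).
    + apply lim_pow, is_lim_seq_minus'; [apply is_lim_seq_const|].
      apply rate_lim_proportional; [lra|exact Hr].
    + replace (1 - 1 / (1 + 0)) with 0 by field. apply pow_i. lia.
Qed.

End DiagonalRegimes.

Lemma G_cdf_sum (c : R) (t : nat) : 0 < c -> sum_f_R0 (G_pmf c) t = 1 - (c / (1 + c)) ^ (t + 2).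
Proof.
  intros Hc. assert (H1 : 1 + c <> 0) by lra.
  induction t as [|t IH]; [simpl; field; exact H1|].
  simpl sum_f_R0. rewrite IH. unfold G_pmf.
  replace (S t + 1)%nat with (S (S t)) by lia. replace (S t + 2)%nat with (S (S (S t))) by lia.
  replace (t + 2)%nat with (S (S t)) by lia. replace (t + 1)%nat with (S t) by lia.
  unfold Rdiv. rewrite !Rpow_mult_distr, !pow_inv. simpl pow.
  assert ((1 + c) ^ t <> 0) by (apply pow_nonzero; exact H1).
  set (z := c ^ t). set (y := (1 + c) ^ t). field. auto.
Qed.

Theorem exp_limit (ns ks is : nat -> nat) :
  (forall m, (2 <= ns m)%nat /\ (1 <= is m <= ns m)%nat) ->
  cv_infty (fun m => INR (ns m)) -> cv_infty (fun m => INR (ks m)) ->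
  cv_infty (fun m => INR (ks m) / INR (ns m)) ->
  forall x : R,
    Un_cv (fun m => cdfS (ns m) (ks m) (is m) (fun s => INR (ns m) / INR (ks m) * INR s) x)
          (exp1_cdf x).
Proof.
  intros Hall Hn _ Hr x.
  apply is_lim_seq_p_infty_Reals in Hn, Hr. apply is_lim_seq_Reals.
  assert (Hn2 : forall m, (2 <= ns m)%nat) by apply Hall.
  assert (Ha : eventually (fun m => 0 < INR (ns m) / INR (ks m))).
  { generalize (K_pos_sparse ns ks Hr). apply filter_imp. intros m Hm.
    apply Rdiv_lt_0_compat; [apply lt_0_INR; specialize (Hn2 m); lia|exact Hm]. }
  unfold exp1_cdf. destruct (Rlt_dec x 0) as [Hx|Hx].
  - apply (is_lim_seq_ext_loc (fun _ => 0)); [|apply is_lim_seq_const].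
    revert Ha. apply filter_imp. intros m Hm. symmetry. apply cdf_negative; [|exact Hx].
    intros s. apply Rmult_le_pos; [lra|apply pos_INR].
  - apply Rnot_lt_le in Hx.
    apply (is_lim_seq_ext_loc (fun m =>
      1 - occ_tail (ns m) (ks m) (flo (x / (INR (ns m) / INR (ks m))) + 2))).
    + revert Ha. apply filter_imp. intros m Hm. symmetry.
      apply cdf_scaled; [apply Hall|exact Hm|exact Hx|reflexivity].
    + apply is_lim_seq_minus'; [apply is_lim_seq_const|].
      apply occ_tail_lim_exp; [exact Hn2|exact Hn|exact Hr| |intros m; lia].
      apply lim_threshold; [exact Hx|apply N_over_K_lim; assumption|exact Ha].
Qed.

(* Part (3): for k/n -> c > 0, S -> G.  The distribution functions agree exactly with
   1 - P{occ >= floor x + 2}, so the convergence holds at every x, not only off the atoms. *)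
Theorem geometric_limit (ns ks is : nat -> nat) (c : R) :
  (forall m, (2 <= ns m)%nat /\ (1 <= is m <= ns m)%nat) ->
  cv_infty (fun m => INR (ns m)) -> cv_infty (fun m => INR (ks m)) ->
  0 < c -> Un_cv (fun m => INR (ks m) / INR (ns m)) c ->
  forall x : R, (forall j : nat, x <> INR j) ->
    Un_cv (fun m => cdfS (ns m) (ks m) (is m) INR x) (G_cdf c x).
Proof.
  intros Hall Hn Hk Hc Hr x _.
  apply is_lim_seq_p_infty_Reals in Hn, Hk. apply is_lim_seq_Reals in Hr. apply is_lim_seq_Reals.
  unfold G_cdf. destruct (Rlt_dec x 0) as [Hx|Hx].
  - apply (is_lim_seq_ext (fun _ => 0)); [|apply is_lim_seq_const].
    intros m. symmetry. apply cdf_negative; [apply pos_INR|exact Hx].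
  - apply Rnot_lt_le in Hx. fold (flo x). rewrite G_cdf_sum by exact Hc.
    apply (is_lim_seq_ext (fun m => 1 - occ_tail (ns m) (ks m) (flo x + 2))).
    + intros m. symmetry. apply cdf_unscaled; [apply Hall|exact Hx].
    + apply is_lim_seq_minus'; [apply is_lim_seq_const|].
      apply occ_tail_lim_geom; try assumption. intros m; apply Hall.
Qed.

(* Part (4): for k/n -> 0, S -> 0 (again at every x). *)
Theorem degenerate_limit (ns ks is : nat -> nat) :
  (forall m, (2 <= ns m)%nat /\ (1 <= is m <= ns m)%nat) ->
  cv_infty (fun m => INR (ns m)) ->
  Un_cv (fun m => INR (ks m) / INR (ns m)) 0 ->
  forall x : R, x <> 0 ->
    Un_cv (fun m => cdfS (ns m) (ks m) (is m) INR x) (delta0_cdf x).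
Proof.
  intros Hall Hn Hr x _.
  apply is_lim_seq_p_infty_Reals in Hn. apply is_lim_seq_Reals in Hr. apply is_lim_seq_Reals.
  unfold delta0_cdf. destruct (Rlt_dec x 0) as [Hx|Hx].
  - apply (is_lim_seq_ext (fun _ => 0)); [|apply is_lim_seq_const].
    intros m. symmetry. apply cdf_negative; [apply pos_INR|exact Hx].
  - apply Rnot_lt_le in Hx.
    apply (is_lim_seq_ext (fun m => 1 - occ_tail (ns m) (ks m) (flo x + 2))).
    + intros m. symmetry. apply cdf_unscaled; [apply Hall|exact Hx].
    + apply (lim_replace _ (1 - 0)); [|ring].
      apply is_lim_seq_minus'; [apply is_lim_seq_const|].
      apply occ_tail_lim_zero; [intros m; apply Hall|exact Hn|lia|exact Hr].
Qed.

Theorem mainTheorem17 :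
  (forall (n i : nat), (2 <= n)%nat -> (1 <= i <= n)%nat ->
     forall x : R,
       Un_cv (fun k => cdfS n k i (fun s => INR s / INR k) x) (beta1_cdf n x))
  /\
  (forall (ns ks is : nat -> nat),
     (forall m, (2 <= ns m)%nat /\ (1 <= is m <= ns m)%nat) ->
     cv_infty (fun m => INR (ns m)) -> cv_infty (fun m => INR (ks m)) ->
     cv_infty (fun m => INR (ks m) / INR (ns m)) ->
     forall x : R,
       Un_cv (fun m => cdfS (ns m) (ks m) (is m)
                         (fun s => INR (ns m) / INR (ks m) * INR s) x)
             (exp1_cdf x))
  /\
  (forall (ns ks is : nat -> nat) (c : R),
     (forall m, (2 <= ns m)%nat /\ (1 <= is m <= ns m)%nat) ->
     cv_infty (fun m => INR (ns m)) -> cv_infty (fun m => INR (ks m)) ->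
     0 < c -> Un_cv (fun m => INR (ks m) / INR (ns m)) c ->
     forall x : R, (forall j : nat, x <> INR j) ->
       Un_cv (fun m => cdfS (ns m) (ks m) (is m) INR x) (G_cdf c x))
  /\
  (forall (ns ks is : nat -> nat),
     (forall m, (2 <= ns m)%nat /\ (1 <= is m <= ns m)%nat) ->
     cv_infty (fun m => INR (ns m)) ->
     Un_cv (fun m => INR (ks m) / INR (ns m)) 0 ->
     forall x : R, x <> 0 ->
       Un_cv (fun m => cdfS (ns m) (ks m) (is m) INR x) (delta0_cdf x)).
Proof.
  split; [exact beta_limit|].
  split; [exact exp_limit|].
  split; [exact geometric_limit|exact degenerate_limit].
Qed.
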